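(* Let $\mathcal{X}$ be a measurable space, $\mathcal{G}$ a class of measurable classifiers $g:\mathcal{X}\to\{-1,+1\}$, and $p\in(0,1)$ a known number. Let $(X'_1,Y'_1),\ldots,(X'_n,Y'_n)$ be i.i.d. copies of a pair $(X',Y')$ valued in $\mathcal{X}\times\{-1,+1\}$ with $p'=\mathbb{P}\{Y'=+1\}$. Let $\varepsilon\in(0,1/2)$ and suppose $p'\in(\varepsilon,1-\varepsilon)$. Define, for $g\in\mathcal{G}$, $$\widetilde{\mathcal{R}}_{w^*,n}(g)=\frac{p}{p'}\frac{1}{n}\sum_{i:Y'_i=+1}\mathbb{I}\{g(X'_i)=-1\}+\frac{1-p}{1-p'}\frac{1}{n}\sum_{i:Y'_i=-1}\mathbb{I}\{g(X'_i)=+1\},$$ $$\widetilde{\mathcal{R}}_{\widehat{w}^*,n}(g)=\frac{p}{n'_+}\sum_{i:Y'_i=+1}\mathbb{I}\{g(X'_i)=-1\}+\frac{1-p}{n'_-}\sum_{i:Y'_i=-1}\mathbb{I}\{g(X'_i)=+1\},$$ where $n'_+=\sum_{i=1}^n\mathbb{I}\{Y'_i=+1\}$ and $n'_-=n-n'_+$. Then for any $\delta\in(0,1)$, as soon as $n\ge 2\log(2/\delta)/\varepsilon^2$, with probability larger than $1-\delta$, $$\sup_{g\in\mathcal{G}}\left|\widetilde{\mathcal{R}}_{\widehat{w}^*,n}(g)-\widetilde{\mathcal{R}}_{w^*,n}(g)\right|\le\frac{2}{\varepsilon^2}\sqrt{\frac{\log(2/\delta)}{2n}}.$$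
   Context: $\mathbb{I}\{\cdot\}$ denotes the indicator function. *)

From HB Require Import structures.
From mathcomp Require Import all_boot all_order all_algebra.
From mathcomp Require Import all_classical all_reals all_analysis.
Set Implicit Arguments. Unset Strict Implicit. Unset Printing Implicit Defensive.
Import Order.TTheory GRing.Theory Num.Theory.
Local Open Scope classical_set_scope.
Local Open Scope ring_scope.

(* Labels {-1,+1} are encoded as bool: true <-> +1, false <-> -1. *)

Definition mutually_independent {R : realType} d (Omega : measurableType d)
  (P : probability Omega R) d' (T' : measurableType d') (n : nat)
  (Z : 'I_n -> Omega -> T') : Prop :=
  forall (J : {set 'I_n}) (B : 'I_n -> set T'),
    (forall j, measurable (B j)) ->
    P (\big[setI/setT]_(j in J) (Z j @^-1` B j)) =
    (\prod_(j in J) P (Z j @^-1` B j))%E.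

Definition same_distribution {R : realType} d (Omega : measurableType d)
  (P : probability Omega R) d' (T' : measurableType d')
  (Z Z' : Omega -> T') : Prop :=
  forall B : set T', measurable B -> P (Z @^-1` B) = P (Z' @^-1` B).

Section Risks.
Variables (R : realType) (Omega T : Type) (n : nat).
Variables (X : 'I_n -> Omega -> T) (Y : 'I_n -> Omega -> bool).

Definition npos (w : Omega) : R := (\sum_(i < n | Y i w) 1).
Definition nneg (w : Omega) : R := n%:R - npos w.

Definition err_pos (g : T -> bool) (w : Omega) : R :=
  \sum_(i < n | Y i w) (if g (X i w) then 0 else 1).
Definition err_neg (g : T -> bool) (w : Omega) : R :=
  \sum_(i < n | ~~ Y i w) (if g (X i w) then 1 else 0).

Definition risk_wstar (p p' : R) (g : T -> bool) (w : Omega) : R :=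
  p / p' * (n%:R^-1 * err_pos g w) + (1 - p) / (1 - p') * (n%:R^-1 * err_neg g w).

(* \tilde R_{\hat w^*,n}(g)  (x / 0 = 0 by MathComp convention) *)
Definition risk_what (p : R) (g : T -> bool) (w : Omega) : R :=
  p / npos w * err_pos g w + (1 - p) / nneg w * err_neg g w.
End Risks.

(* The two empirical risks weight the same error counts, by p / n'_+ and
   (1 - p) / n'_- on one side and by p / (n p') and (1 - p) / (n (1 - p')) on
   the other.  Since p' and 1 - p' exceed eps, their difference is at most
   |n'_+ / n - p'| / eps, uniformly in g.  The label count n'_+ is binomial
   (n, p'), and a Chernoff bound with parameter s / 4 shows that each tail
   {|n'_+ / n - p'| > s} has probability at most exp (- n s^2 / 8); for
   s = (2 / eps) sqrt (log (2 / delta) / (2 n)) both tails together are below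
   delta. *)
From HB Require Import structures.
From mathcomp Require Import all_boot all_order all_algebra.
From mathcomp Require Import all_classical all_reals all_analysis.
From mathcomp Require Import ring lra.
Set Implicit Arguments.
Unset Strict Implicit.
Unset Printing Implicit Defensive.
Import Order.TTheory GRing.Theory Num.Theory.
Local Open Scope classical_set_scope.
Local Open Scope ring_scope.

Section BernoulliTail.
Variable R : realType.
Implicit Types (r s l K : R) (n : nat).

Definition bernoulli_pmf r (x : bool) : R := if x then r else 1 - r.

Definition count_true n (b : {ffun 'I_n -> bool}) : R := \sum_(i < n | b i) 1.

Lemma bernoulli_pmf_ge0 r x : 0 <= r <= 1 -> 0 <= bernoulli_pmf r x.
Proof. by case: x => /andP[r0 r1] /=; lra. Qed.

Lemma chernoff_sum (I : finType) (w f : I -> R) K l :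
  0 <= l -> (forall i, 0 <= w i) ->
  \sum_(i | K < f i) w i <= expR (- (l * K)) * \sum_i w i * expR (l * f i).
Proof.
move=> l0 w0; rewrite mulr_sumr big_mkcond /=; apply: ler_sum => i _.
rewrite mulrCA -expRD; case: ifP => [Kf|_]; last by rewrite mulr_ge0 ?expR_ge0.
rewrite -[leLHS]mulr1 ler_wpM2l// -expR0 ler_expR addrC -mulrBr.
by rewrite mulr_ge0// subr_ge0 ltW.
Qed.

Lemma bernoulli_mgf n r l :
  \sum_(b : {ffun 'I_n -> bool})
     (\prod_(i < n) bernoulli_pmf r (b i)) * expR (l * count_true b)
  = (r * expR l + (1 - r)) ^+ n.
Proof.
pose G x := bernoulli_pmf r x * expR (if x then l else 0).
have GE (b : {ffun 'I_n -> bool}) :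
    (\prod_(i < n) bernoulli_pmf r (b i)) * expR (l * count_true b)
    = \prod_(i < n) G (b i).
  rewrite /count_true mulr_sumr expR_sum [X in _ * X]big_mkcond -big_split /=.
  by apply: eq_bigr => i _; rewrite /G; case: (b i); rewrite /= ?expR0 ?mulr1.
under eq_bigr do rewrite GE.
rewrite -(bigA_distr_bigA (fun _ : 'I_n => G)) /= prodr_const card_ord.
by rewrite big_bool /G /= expR0 mulr1.
Qed.

Lemma bernoulli_exponent_le r s : 0 <= r <= 1 -> 0 <= s <= 1 ->
  r * (expR (s / 4) - 1) - s / 4 * (r + s) <= - (s ^+ 2 / 8).
Proof.
move=> /andP[r0 r1] /andP[s0 s1]; set l := s / 4; set E := expR l.
have l0 : 0 <= l <= 1 / 4 by rewrite /l; lra.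
have E1 : 1 <= E by rewrite /E -expR0 ler_expR; lra.
have El : E * (1 - l) <= 1.
  have := expR_ge1Dx (- l); rewrite expRN -/E => h.
  have E0 : 0 < E by rewrite /E expR_gt0.
  by have := ler_wpM2l (ltW E0) h; rewrite mulfV ?gt_eqF.
have h2 : E - 1 - l <= 4 / 3 * l ^+ 2 by nra.
have -> : s = 4 * l by rewrite /l; lra.
nra.
Qed.

Lemma bernoulli_upper_tail n r s : 0 <= r <= 1 -> 0 <= s <= 1 ->
  \sum_(b : {ffun 'I_n -> bool} | n%:R * (r + s) < count_true b)
     \prod_(i < n) bernoulli_pmf r (b i) <= expR (- (n%:R * s ^+ 2 / 8)).
Proof.
move=> r01 s01; set l := s / 4.
have l0 : 0 <= l by rewrite /l; case/andP: s01; lra.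
pose w (b : {ffun 'I_n -> bool}) := \prod_(i < n) bernoulli_pmf r (b i).
apply: le_trans (@chernoff_sum _ w (@count_true n) _ l l0 _) _.
  by move=> b; apply: prodr_ge0 => i _; exact: bernoulli_pmf_ge0.
rewrite bernoulli_mgf.
have mgf_le : r * expR l + (1 - r) <= expR (r * (expR l - 1)).
  by apply: le_trans _ (expR_ge1Dx _); lra.
apply: (@le_trans _ _
  (expR (- (l * (n%:R * (r + s)))) * expR (r * (expR l - 1)) ^+ n)).
  rewrite ler_wpM2l ?expR_ge0// lerXn2r ?nnegrE ?expR_ge0//.
  by have := expR_gt0 l; case/andP: r01; nra.
rewrite -expRM_natl -expRD ler_expR.
have := ler_wpM2l (ler0n R n) (bernoulli_exponent_le r01 s01).
rewrite -/l; lra.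
Qed.

End BernoulliTail.

Lemma le_measure_bigsetU d (T : measurableType d) (R : realType)
    (mu : {measure set T -> \bar R}) (I : Type) (s : seq I) (P : pred I)
    (F : I -> set T) : (forall i, measurable (F i)) ->
  (mu (\big[setU/set0]_(i <- s | P i) F i) <= \sum_(i <- s | P i) mu (F i))%E.
Proof.
move=> mF; elim: s => [|x s IH]; first by rewrite !big_nil measure0.
rewrite !big_cons; case: (P x) => //.
apply: le_trans (measureU2 _ _ _) _ => //; first exact: bigsetU_measurable.
exact: leeD2l.
Qed.

Section Transfer.
Context {R : realType} d (Omega : measurableType d) (P : probability Omega R).
Context d' (T' : measurableType d') d'' (T'' : measurableType d'').
Variables (f : T' -> T'') (mf : measurable_fun setT f).

Let measurable_preimage B : measurable B -> measurable (f @^-1` B).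
Proof. by move=> mB; rewrite -[_ @^-1` _]setTI; exact: mf. Qed.

Lemma mutually_independent_comp n (Z : 'I_n -> Omega -> T') :
  mutually_independent P Z -> mutually_independent P (fun i => f \o Z i).
Proof.
by move=> indZ J B mB; apply: (indZ J (fun j => f @^-1` B j)) => j;
  exact: measurable_preimage.
Qed.

Lemma same_distribution_comp (Z Z' : Omega -> T') :
  same_distribution P Z Z' -> same_distribution P (f \o Z) (f \o Z').
Proof.
by move=> eqZ B mB; apply: (eqZ (f @^-1` B)); exact: measurable_preimage.
Qed.

End Transfer.

Section IndependentBernoulli.
Context {R : realType} d (Omega : measurableType d) (P : probability Omega R).
Variables (n : nat) (Y : 'I_n -> Omega -> bool).
Hypotheses (mY : forall i, measurable_fun setT (Y i))
           (indY : mutually_independent P Y).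
Variable r : R.
Hypotheses (r01 : 0 <= r <= 1) (PY : forall i, P (Y i @^-1` [set true]) = r%:E).

Definition sample (w : Omega) : {ffun 'I_n -> bool} := [ffun i => Y i w].

Definition outcome_event (b : {ffun 'I_n -> bool}) : set Omega :=
  \big[setI/setT]_(i in [set: 'I_n]%SET) (Y i @^-1` [set b i]).

Lemma outcome_eventE b : outcome_event b = sample @^-1` [set b].
Proof.
apply/seteqP; split => w /=.
- move=> Ew; apply/ffunP => i; rewrite ffunE.
  by move: Ew; rewrite /outcome_event (bigD1 i) ?finset.in_setT //; case.
- move=> <-; rewrite /outcome_event.
  by apply: (big_ind (fun A : set Omega => A w)) => // i _; rewrite /= ffunE.
Qed.

Lemma measurable_outcome_event b : measurable (outcome_event b).
Proof.
apply: bigsetI_measurable => i _; rewrite -[_ @^-1` _]setTI; exact: mY.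
Qed.

Lemma prob_Y_eq i x : P (Y i @^-1` [set x]) = (bernoulli_pmf r x)%:E.
Proof.
case: x; first exact: PY.
have -> : Y i @^-1` [set false] = ~` (Y i @^-1` [set true]).
  by apply/seteqP; split => w /=; case: (Y i w).
rewrite probability_setC ?PY //; rewrite -[_ @^-1` _]setTI; exact: mY.
Qed.

Lemma prob_outcome_event b :
  P (outcome_event b) = (\prod_(i < n) bernoulli_pmf r (b i))%:E.
Proof.
rewrite /outcome_event.
have := indY [set: 'I_n]%SET => /(_ (fun i => [set b i])) -> //.
rewrite -prodEFin.
by apply: eq_big => [i|i _]; [rewrite finset.in_setT | exact: prob_Y_eq].
Qed.

Lemma sample_preimageE (S : pred {ffun 'I_n -> bool}) :
  sample @^-1` [set b | S b] = \big[setU/set0]_(b | S b) outcome_event b.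
Proof.
apply/seteqP; split => w /=.
- by move=> Sw; rewrite (bigD1 (sample w)) //= outcome_eventE; left.
- apply: (big_ind (fun A => A `<=` [set w | S (sample w)])) => //.
    by move=> A B; rewrite subUset.
  by move=> b Sb; rewrite outcome_eventE => w' /= ->.
Qed.

Lemma measurable_sample_preimage (S : pred {ffun 'I_n -> bool}) :
  measurable (sample @^-1` [set b | S b]).
Proof.
by rewrite sample_preimageE; apply: bigsetU_measurable => b _;
  exact: measurable_outcome_event.
Qed.

Lemma prob_sample_preimage_le (S : pred {ffun 'I_n -> bool}) :
  (P (sample @^-1` [set b | S b]) <=
     (\sum_(b | S b) \prod_(i < n) bernoulli_pmf r (b i))%:E)%E.
Proof.
rewrite sample_preimageE -sumEFin.
rewrite (eq_bigr (fun b => P (outcome_event b))) => [|b _]; last first.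
  by rewrite prob_outcome_event.
apply: le_measure_bigsetU; exact: measurable_outcome_event.
Qed.

Lemma npos_sample w : npos R Y w = count_true R (sample w).
Proof. by apply: eq_bigl => i; rewrite ffunE. Qed.

Lemma npos_eventE (Q : pred R) :
  [set w | Q (npos R Y w)] = sample @^-1` [set b | Q (count_true R b)].
Proof. by apply/seteqP; split => w /=; rewrite npos_sample. Qed.

Lemma measurable_npos_event (Q : pred R) : measurable [set w | Q (npos R Y w)].
Proof. by rewrite npos_eventE; exact: measurable_sample_preimage. Qed.

Lemma prob_npos_upper_tail s : 0 <= s <= 1 ->
  (P [set w | n%:R * (r + s) < npos R Y w]%R <=
     (expR (- (n%:R * s ^+ 2 / 8)))%:E)%E.
Proof.
move=> s01; rewrite (npos_eventE (fun x => n%:R * (r + s) < x)).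
apply: le_trans (prob_sample_preimage_le _) _.
by rewrite lee_fin; exact: bernoulli_upper_tail.
Qed.

End IndependentBernoulli.

Section Counts.
Variables (R : realType) (Omega : Type) (n : nat) (Y : 'I_n -> Omega -> bool).

Lemma nnegE w : nneg R Y w = \sum_(i < n | ~~ Y i w) 1.
Proof.
rewrite /nneg /npos -[n in n%:R]card_ord -sumr_const.
by rewrite (bigID (fun i => Y i w)) /= addrAC subrr add0r.
Qed.

Lemma npos_negb w : npos R (fun i w => ~~ Y i w) w = nneg R Y w.
Proof. by rewrite nnegE. Qed.

End Counts.

Section Concentration.
Context {R : realType} d (Omega : measurableType d) (P : probability Omega R).
Variables (n : nat) (Y : 'I_n -> Omega -> bool).
Hypotheses (mY : forall i, measurable_fun setT (Y i))
           (indY : mutually_independent P Y).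
Variable r : R.
Hypotheses (r01 : 0 <= r <= 1) (PY : forall i, P (Y i @^-1` [set true]) = r%:E).

Lemma prob_nneg_upper_tail s : 0 <= s <= 1 ->
  (P [set w | n%:R * ((1 - r) + s) < nneg R Y w]%R <=
     (expR (- (n%:R * s ^+ 2 / 8)))%:E)%E.
Proof.
move=> s01; have mnegb : measurable_fun [set: bool] negb by [].
under eq_set do rewrite -npos_negb.
apply: prob_npos_upper_tail => //.
- by move=> i; exact: measurableT_comp.
- exact: mutually_independent_comp.
- by move: r01 => /andP[]; lra.
- move=> i; rewrite -(prob_Y_eq mY PY i false).
  by congr (P _); apply/seteqP; split => w /=; case: (Y i w).
Qed.

Lemma prob_npos_concentration s : (0 < n)%N -> 0 <= s <= 1 ->
  ((1 - 2 * expR (- (n%:R * s ^+ 2 / 8)))%:E <=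
     P [set w | `|npos R Y w / n%:R - r| <= s]%R)%E.
Proof.
move=> n0 s01; set e := expR _; set A := [set w | _].
set U := [set w | n%:R * (r + s) < npos R Y w]%R.
set L := [set w | n%:R * ((1 - r) + s) < nneg R Y w]%R.
have mA : measurable A :=
  measurable_npos_event mY (fun x => `|x / n%:R - r| <= s).
have mU : measurable U :=
  measurable_npos_event mY (fun x => n%:R * (r + s) < x).
have mL : measurable L :=
  measurable_npos_event mY (fun x => n%:R * ((1 - r) + s) < n%:R - x).
have mnA : measurable (~` A) := measurableC mA.
have nAUL : ~` A `<=` U `|` L.
  move=> w /= /negP; rewrite -ltNge /U /L /nneg /=.
  have N0 : 0 < n%:R :> R by rewrite ltr0n.
  set a := npos R Y w.
  have aE : a = n%:R * (a / n%:R) by rewrite mulrC divfK ?gt_eqF.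
  rewrite ltr_normr => /orP[dev|dev]; [left|right].
    by rewrite [X in _ < X]aE ltr_pM2l //; lra.
  by rewrite [X in _ < _ - X]aE -[X in X - _]mulr1 -mulrBr ltr_pM2l //; lra.
have PnA : (P (~` A) <= (2 * e)%:E)%E.
  apply: le_trans (le_measure _ _ _ nAUL) _; rewrite ?inE //.
    exact: measurableU.
  apply: le_trans (measureU2 _ mU mL) _.
  rewrite mulr2n mulrDl mul1r EFinD.
  by apply: leeD; [exact: prob_npos_upper_tail|exact: prob_nneg_upper_tail].
rewrite -[A]setCK probability_setC //.
move: PnA; rewrite -[P (~` A)]fineK ?fin_num_measure //.
by rewrite lee_fin -EFinN -EFinD lee_fin; lra.
Qed.

End Concentration.

Lemma reweighted_error_le (R : realFieldType) (a e N q c : R) :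
  0 <= e <= a -> 0 < N -> 0 < q -> 0 <= c ->
  `| c / a * e - c / q * (N^-1 * e) | <= c / q * `| a / N - q |.
Proof.
move=> /andP[e0 ea] N0 q0 c0.
have cq : 0 <= c / q by rewrite divr_ge0 // ltW.
have [a0|a0] := eqVneq a 0.
  have -> : e = 0 by apply/eqP; rewrite eq_le e0 andbT -a0.
  by rewrite !mulr0 subr0 normr0 mulr_ge0.
have ap : 0 < a by rewrite lt_neqAle eq_sym a0 (le_trans e0 ea).
have ea1 : 0 <= e / a <= 1.
  by rewrite divr_ge0 ?(ltW ap) //= ler_pdivrMr // mul1r.
have -> : c / a * e - c / q * (N^-1 * e) = c / q * (e / a) * (q - a / N).
  by field; rewrite a0 !gt_eqF.
rewrite normrM normrM (ger0_norm cq) (ger0_norm (andP ea1).1) (distrC q) -mulrA.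
by rewrite ler_wpM2l // ler_piMl //; case/andP: ea1.
Qed.

Section EmpiricalRisks.
Variables (R : realType) (Omega T : Type) (n : nat).
Variables (X : 'I_n -> Omega -> T) (Y : 'I_n -> Omega -> bool).
Variables (g : T -> bool) (w : Omega).

Lemma err_pos_bounds : 0 <= err_pos R X Y g w <= npos R Y w.
Proof.
by apply/andP; split; [apply: sumr_ge0|apply: ler_sum] => i _; case: ifP.
Qed.

Lemma err_neg_bounds : 0 <= err_neg R X Y g w <= nneg R Y w.
Proof.
rewrite nnegE; apply/andP; split; [apply: sumr_ge0|apply: ler_sum] => i _;
  by case: ifP.
Qed.

Lemma risk_what_wstar_le (p p' eps : R) : (0 < n)%N -> 0 <= p <= 1 ->
  0 < eps -> eps < p' < 1 - eps ->
  `| risk_what X Y p g w - risk_wstar X Y p p' g w |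
    <= `| npos R Y w / n%:R - p' | / eps.
Proof.
move=> n0 /andP[p0 p1] e0 /andP[pe1 pe2].
have N0 : 0 < n%:R :> R by rewrite ltr0n.
have nnegE' : nneg R Y w / n%:R - (1 - p') = - (npos R Y w / n%:R - p').
  by rewrite /nneg; field; rewrite gt_eqF.
have q0 : 0 < p' by lra.
have q1 : 0 < 1 - p' by lra.
have p1' : 0 <= 1 - p by lra.
have := reweighted_error_le err_pos_bounds N0 q0 p0.
have := reweighted_error_le err_neg_bounds N0 q1 p1'.
rewrite nnegE' normrN /risk_what /risk_wstar.
set D := `| _ - p' |; set A1 := p / _ * _; set A2 := (1 - p) / _ * _.
set B1 := p / p' * _; set B2 := (1 - p) / (1 - p') * _ => t2 t1.
have wsum : p / p' * D + (1 - p) / (1 - p') * D <= D / eps.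
  have r1 : p / p' <= p / eps by rewrite ler_wpM2l // lef_pV2 ?posrE; lra.
  have r2 : (1 - p) / (1 - p') <= (1 - p) / eps.
    by rewrite ler_wpM2l ?subr_ge0 // lef_pV2 ?posrE; lra.
  have E : p / eps * D + (1 - p) / eps * D = D / eps by field; rewrite gt_eqF.
  have D0 : 0 <= D := normr_ge0 _.
  by have := ler_wpM2r D0 r1; have := ler_wpM2r D0 r2; lra.
have -> : A1 + A2 - (B1 + B2) = (A1 - B1) + (A2 - B2) by ring.
by apply: le_trans (ler_normD _ _) _; lra.
Qed.

End EmpiricalRisks.

Lemma sample_size_conditions (R : realType) (eps delta s : R) (n : nat) :
  0 < eps < 1 / 2 -> 0 < delta < 1 -> 2 * ln (2 / delta) / eps ^+ 2 <= n%:R ->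
  s = 2 / eps * Num.sqrt (ln (2 / delta) / (2 * n%:R)) ->
  [/\ (0 < n)%N, 0 <= s <= 1 & 2 * expR (- (n%:R * s ^+ 2 / 8)) <= delta].
Proof.
move=> /andP[e0 e12] /andP[d0 d1] hn sE; set L := ln (2 / delta) in hn sE.
have L0 : 0 < L by rewrite ln_gt0 // ltr_pdivlMr // mul1r; lra.
have e20 : 0 < eps ^+ 2 by exact: exprn_gt0.
have N0 : 0 < n%:R :> R by apply: lt_le_trans hn; rewrite divr_gt0 // mulr_gt0.
have s2 : s ^+ 2 = 2 * L / eps ^+ 2 / n%:R.
  rewrite sE exprMn sqr_sqrtr ?divr_ge0 ?mulr_ge0 ?ltW //.
  by field; rewrite !gt_eqF.
have s0 : 0 <= s by rewrite sE mulr_ge0 ?sqrtr_ge0 ?divr_ge0 ?ltW.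
split; first by rewrite -(ltr0n R).
  apply/andP; split => //.
  have : s ^+ 2 <= 1 by rewrite s2 ler_pdivrMr // mul1r.
  by nra.
(* the crude exponent n s^2 / 8 suffices because eps^2 <= 1/4 *)
have LE : L <= n%:R * s ^+ 2 / 8.
  rewrite s2 (_ : n%:R * (2 * L / eps ^+ 2 / n%:R) / 8 = L / (4 * eps ^+ 2)).
    have e2 : eps ^+ 2 <= 1 / 4 by nra.
    by rewrite ler_pdivlMr ?mulr_gt0 //; nra.
  by field; rewrite !gt_eqF.
have : expR (- (n%:R * s ^+ 2 / 8)) <= expR (- L) by rewrite ler_expR lerN2.
rewrite (expRN L) /L lnK ?posrE ?divr_gt0 // invf_div; lra.
Qed.

Theorem lemma2 (R : realType)
  (dX : measure_display) (T : measurableType dX)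
  (G : set (T -> bool)) (hG : forall g, G g -> measurable_fun setT g)
  (p : R) (hp : 0 < p < 1)
  (dO : measure_display) (Omega : measurableType dO) (P : probability Omega R)
  (X0 : Omega -> T) (Y0 : Omega -> bool)
  (mX0 : measurable_fun setT X0) (mY0 : measurable_fun setT Y0)
  (n : nat) (X : 'I_n -> Omega -> T) (Y : 'I_n -> Omega -> bool)
  (mX : forall i, measurable_fun setT (X i))
  (mY : forall i, measurable_fun setT (Y i))
  (hiid_ind : mutually_independent P (fun i w => (X i w, Y i w)))
  (hiid_dist : forall i, same_distribution P (fun w => (X i w, Y i w))
                                             (fun w => (X0 w, Y0 w)))
  (p' : R) (hp' : P [set w | Y0 w] = p'%:E)
  (eps : R) (heps : 0 < eps < 1 / 2) (hp'eps : eps < p' < 1 - eps)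
  (delta : R) (hdelta : 0 < delta < 1)
  (hn : 2 * ln (2 / delta) / eps ^+ 2 <= n%:R) :
  exists A : set Omega, measurable A /\ ((1 - delta)%:E <= P A)%E /\
    forall w, A w ->
      (ereal_sup [set (`| risk_what X Y p g w - risk_wstar X Y p p' g w |)%:E
                 | g in G]
       <= (2 / eps ^+ 2 * Num.sqrt (ln (2 / delta) / (2 * n%:R)))%:E)%E.
Proof.
have indY : mutually_independent P Y :=
  mutually_independent_comp measurable_snd hiid_ind.
have PY i : P (Y i @^-1` [set true]) = p'%:E.
  by rewrite -hp'; exact: (same_distribution_comp measurable_snd (hiid_dist i)).
pose s := 2 / eps * Num.sqrt (ln (2 / delta) / (2 * n%:R)).
have [n0 s01 tail_le] := sample_size_conditions heps hdelta hn (erefl s).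
move: hp heps hp'eps => /andP[p0 p1] /andP[e0 _] hp'eps.
have p'01 : 0 <= p' <= 1 by case/andP: hp'eps => ? ?; lra.
exists [set w | `|npos R Y w / n%:R - p'| <= s]%R; split.
  exact: (measurable_npos_event mY (fun x => `|x / n%:R - p'| <= s)).
split.
  apply: le_trans (prob_npos_concentration mY indY p'01 PY n0 s01).
  by rewrite lee_fin; lra.
move=> w dev; apply: ge_ereal_sup => _ [g _ <-]; rewrite lee_fin.
have p01 : 0 <= p <= 1 by apply/andP; split; lra.
apply: le_trans (risk_what_wstar_le X Y g w n0 p01 e0 hp'eps) _.
rewrite ler_pdivrMr // (_ : 2 / eps ^+ 2 * _ * eps = s) //.
by rewrite /s; field; rewrite gt_eqF.
Qed.
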